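(* Let $\mathcal{M}$ be an unbounded graph matroid family and let $G$ be an $\mathcal{M}$-reconstructible graph with at least two edges. Then $\mathcal{M}(G)$ is bridgeless (i.e., has no coloops).
   Context: All graphs are finite and simple and have no isolated vertices. A graph matroid family $\mathcal{M}$ assigns to every graph $G$ a matroid $\mathcal{M}(G)$ on $E(G)$ such that (i) every graph isomorphism $V(G)\to V(H)$ induces an isomorphism $\mathcal{M}(G)\to\mathcal{M}(H)$, and (ii) for every subgraph $H$ of $G$, $\mathcal{M}(H)$ is the restriction of $\mathcal{M}(G)$ to $E(H)$. $\mathcal{M}$ is unbounded if the rank of $\mathcal{M}(K_n)$ is unbounded in $n$. $G$ is $\mathcal{M}$-reconstructible if for every graph $H$ and every matroid isomorphism $\psi:E(G)\to E(H)$ between $\mathcal{M}(G)$ and $\mathcal{M}(H)$ there is a graph isomorphism $\varphi:V(G)\to V(H)$ with $\psi(uv)=\varphi(u)\varphi(v)$ for all $uv\in E(G)$. A bridge of a matroid is an element contained in no circuit. *)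

From mathcomp Require Import all_boot.
From mathcomp Require Import finmap.
Set Implicit Arguments. Unset Strict Implicit. Unset Printing Implicit Defensive.
Local Open Scope fset_scope.

(* An edge {u,v} (u <> v) is stored
   canonically as the ordered pair (u,v) with u < v.  A graph is a finite set of
   such edges; its vertex set is the set of endpoints, so graphs are finite,
   simple and have no isolated vertices by construction. *)
Definition edge := (nat * nat)%type.

Definition mkedge (u v : nat) : edge := (minn u v, maxn u v).

Record graph := Graph {
  gE : {fset edge};
  gE_wf : all (fun e : edge => e.1 < e.2) gE
}.

Definition gV (G : graph) : {fset nat} :=
  [fset e.1 | e in gE G] `|` [fset e.2 | e in gE G].

Definition subgraph (H G : graph) : Prop := gE H `<=` gE G.

Definition K_edges (n : nat) : {fset edge} :=
  [fset e in ([seq (i, j) | i <- iota 0 n, j <- iota 0 n] : seq edge) | e.1 < e.2].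

Lemma K_wf (n : nat) : all (fun e : edge => e.1 < e.2) (K_edges n).
Proof. by apply/allP => e; rewrite /K_edges !inE => /andP[]. Qed.

Definition K (n : nat) : graph := Graph (K_wf n).

Definition graph_iso (G H : graph) (phi : nat -> nat) : Prop :=
  [/\ {in gV G &, injective phi},
      [fset phi v | v in gV G] = gV H &
      {in gV G &, forall u v,
          (mkedge u v \in gE G) = (mkedge (phi u) (phi v) \in gE H)}].

Definition is_matroid (T : choiceType) (E : {fset T}) (indep : {fset T} -> bool)
  : Prop :=
  [/\ forall I, indep I -> I `<=` E,
      indep fset0,
      forall I J, indep J -> I `<=` J -> indep I &
      forall I J, indep I -> indep J -> #|` I| < #|` J| ->
        exists2 x, x \in J `\` I & indep (x |` I)].

Definition mrank (T : choiceType) (E : {fset T}) (indep : {fset T} -> bool) : nat :=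
  \max_(F <- fpowerset E | indep F) #|` F|.

Definition circuit (T : choiceType) (E : {fset T}) (indep : {fset T} -> bool)
  (C : {fset T}) : Prop :=
  [/\ C `<=` E, ~~ indep C & forall D, D `<` C -> indep D].

Definition bridge (T : choiceType) (E : {fset T}) (indep : {fset T} -> bool)
  (e : T) : Prop :=
  e \in E /\ forall C, circuit E indep C -> e \notin C.

Definition bridgeless (T : choiceType) (E : {fset T}) (indep : {fset T} -> bool)
  : Prop := forall e, ~ bridge E indep e.

Definition matroid_iso (T : choiceType) (E1 : {fset T}) (indep1 : {fset T} -> bool)
  (E2 : {fset T}) (indep2 : {fset T} -> bool) (psi : T -> T) : Prop :=
  [/\ {in E1 &, injective psi},
      [fset psi e | e in E1] = E2 &
      forall F, F `<=` E1 -> indep1 F = indep2 [fset psi e | e in F]].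

(* ---------- Graph matroid families --------------------------------------
   A family is given by its independence predicates: M G is the independence
   predicate of the matroid M(G) on E(G). *)
Definition edge_map (phi : nat -> nat) (e : edge) : edge := mkedge (phi e.1) (phi e.2).

Definition graph_matroid_family (M : graph -> {fset edge} -> bool) : Prop :=
  [/\ forall G, is_matroid (gE G) (M G),
      forall G H phi, graph_iso G H phi ->
        matroid_iso (gE G) (M G) (gE H) (M H) (edge_map phi) &
      forall G H, subgraph H G ->
        forall F, M H F = (F `<=` gE H) && M G F].

Definition unbounded_family (M : graph -> {fset edge} -> bool) : Prop :=
  forall k, exists n, k <= mrank (gE (K n)) (M (K n)).

Definition reconstructible (M : graph -> {fset edge} -> bool) (G : graph) : Prop :=
  forall (H : graph) (psi : edge -> edge),
    matroid_iso (gE G) (M G) (gE H) (M H) psi ->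
    exists phi : nat -> nat,
      graph_iso G H phi /\ {in gE G, forall e, psi e = edge_map phi e}.

From mathcomp Require Import all_boot.
From mathcomp Require Import finmap.
From mathcomp Require Import zify.

Set Implicit Arguments. Unset Strict Implicit. Unset Printing Implicit Defensive.
Local Open Scope fset_scope.

(* Unboundedness forces every star to be independent: if the stars with k + 1
   leaves were dependent, a basis of K_{k,k} would span every edge and bound
   the rank of all M(K_n).  Augmenting an independent set F from a large star
   on fresh leaves then shows that F plus a pendant edge xy (y a new vertex)
   stays independent.  So if e is a bridge of M(G), replacing e by xy is an
   isomorphism M(G) ~ M(G - e + xy), which by reconstructibility is induced
   by a graph isomorphism and thus preserves the number of vertices.  Taking
   x outside V(G - e) when exactly one end of e lies outside V(G - e), and
   inside otherwise, makes the two vertex counts differ. *)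

Lemma fset_bij (T T' : choiceType) (y0 : T') (A : {fset T}) (B : {fset T'}) :
  #|` A| = #|` B| ->
  exists2 f : T -> T', {in A &, injective f} & [fset f x | x in A] = B.
Proof.
move=> AB; pose f x := nth y0 (enum_fset B) (index x (enum_fset A)).
have idxA x : x \in A -> index x (enum_fset A) < size (enum_fset B).
  by move=> xA; rewrite -[size _]/#|` B| -AB index_mem.
have inj : {in A &, injective f}.
  move=> x y xA yA /eqP; rewrite /f nth_uniq ?idxA ?fset_uniq // => /eqP eqxy.
  by rewrite -(nth_index x xA) eqxy (set_nth_default y) ?nth_index // index_mem.
exists f => //; apply/eqP; rewrite eqEfcard card_in_imfset // -AB leqnn andbT.
by apply/fsubsetP => _ /imfsetP [x /= xA ->]; apply: mem_nth; apply: idxA.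
Qed.

Lemma imfset_replace (T : choiceType) (a b : T) (F : {fset T}) :
  [fset (if x == a then b else x) | x in F] = if a \in F then b |` (F `\ a) else F.
Proof.
case: ifP => aF; last first.
  rewrite -[RHS]imfset_id; apply: eq_in_imfset => x xF.
  by case: eqP => // xa; move: aF; rewrite -xa xF.
rewrite -[in LHS](fsetD1K aF) imfsetU1 eqxx -[F `\ a in RHS]imfset_id; congr (_ |` _).
by apply: eq_in_imfset => x; rewrite in_fsetD1 => /andP [/negbTE ->].
Qed.

Lemma mkedgeC u v : mkedge u v = mkedge v u.
Proof. by rewrite /mkedge minnC maxnC. Qed.

Lemma mkedge_id (e : edge) : e.1 < e.2 -> mkedge e.1 e.2 = e.
Proof. by case: e => a b /= ab; rewrite /mkedge; congr pair; lia. Qed.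

Lemma mkedge_lt u v : u != v -> (mkedge u v).1 < (mkedge u v).2.
Proof. rewrite /mkedge /=; lia. Qed.

Lemma mkedge_eq a b c d : mkedge a b = mkedge c d ->
  (a = c /\ b = d) \/ (a = d /\ b = c).
Proof. rewrite /mkedge => -[]; lia. Qed.

Lemma mkedge_ends a b w :
  (w == (mkedge a b).1) || (w == (mkedge a b).2) = (w == a) || (w == b).
Proof. by rewrite /mkedge /=; case: leqP; rewrite // orbC. Qed.

Lemma edge_map_mkedge phi u v : edge_map phi (mkedge u v) = mkedge (phi u) (phi v).
Proof. by rewrite /edge_map /mkedge /=; case: leqP; rewrite // minnC maxnC. Qed.

Definition verts (S : {fset edge}) : {fset nat} :=
  [fset e.1 | e in S] `|` [fset e.2 | e in S].

Lemma vertsP v S :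
  reflect (exists2 e, e \in S & (v == e.1) || (v == e.2)) (v \in verts S).
Proof.
rewrite in_fsetU; apply: (iffP orP).
  by case=> /imfsetP [e /= eS ->]; exists e; rewrite ?eqxx ?orbT.
by case=> e eS /orP [] /eqP ->; [left|right]; apply: in_imfset.
Qed.

Lemma verts1 e S : e \in S -> e.1 \in verts S.
Proof. by move=> eS; apply/vertsP; exists e; rewrite ?eqxx. Qed.

Lemma verts2 e S : e \in S -> e.2 \in verts S.
Proof. by move=> eS; apply/vertsP; exists e; rewrite ?eqxx ?orbT. Qed.

Lemma vertsS A B : A `<=` B -> verts A `<=` verts B.
Proof.
move=> /fsubsetP AB; apply/fsubsetP => v /vertsP [e /AB eB ev].
by apply/vertsP; exists e.
Qed.

Lemma vertsU1 e S : verts (e |` S) = e.1 |` (e.2 |` verts S).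
Proof. by rewrite /verts !imfsetU1 fsetUACA -fsetUA. Qed.

Definition new_ends (V : {fset nat}) (e : edge) : nat :=
  ((e.1 \notin V) + (e.2 \notin V))%N.

Lemma new_ends_mkedge V x y : new_ends V (mkedge x y) = ((x \notin V) + (y \notin V))%N.
Proof. by rewrite /new_ends /mkedge /=; case: leqP; rewrite // addnC. Qed.

Lemma card_vertsU1 e S : e.1 != e.2 ->
  #|` verts (e |` S)| = (new_ends (verts S) e + #|` verts S|)%N.
Proof. by move=> e12; rewrite vertsU1 !cardfsU1 in_fset1U negb_or e12 addnA. Qed.

Section IndependenceSystem.
Variables (T : choiceType) (indep : {fset T} -> bool).
Hypothesis indepS : forall I J, I `<=` J -> indep J -> indep I.
Hypothesis indep_aug : forall I J, indep I -> indep J -> #|` I| < #|` J| ->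
  exists2 x, x \in J `\` I & indep (x |` I).

Definition spanned (I : {fset T}) (x : T) := (x \in I) || ~~ indep (x |` I).

Lemma indep_aug_card I J : indep I -> indep J -> #|` I| <= #|` J| ->
  exists I', [/\ I `<=` I', I' `<=` I `|` J, indep I' & #|` I'| = #|` J|].
Proof.
have [n] := ubnP (#|` J| - #|` I|); elim: n I => // n IH I cardJI indI indJ.
rewrite leq_eqVlt => /orP [/eqP eqIJ|ltIJ]; first by exists I; rewrite fsubsetUl eqIJ.
have [x /fsetDP [xJ xI] indxI] := indep_aug indI indJ ltIJ.
have [||I' [xII' I'xIJ indI' cardI']] := IH (x |` I) _ indxI indJ.
1,2: by rewrite cardfsU1 xI; lia.
exists I'; split=> //; first exact: fsubset_trans (fsubsetU1 x I) xII'.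
apply/fsubsetP => y /(fsubsetP I'xIJ); rewrite !inE.
by case/orP => [/orP [/eqP ->|->]|->]; rewrite ?xJ ?orbT.
Qed.

Lemma card_spanned I J : indep I -> indep J -> {subset J <= spanned I} ->
  #|` J| <= #|` I|.
Proof.
move=> indI indJ JI; rewrite leqNgt; apply/negP => /(indep_aug indI indJ).
by case=> x /fsetDP [/JI]; rewrite /spanned => /orP [->|/negP].
Qed.

Lemma spanned_dep I J x : indep I -> indep J -> {subset J <= spanned I} ->
  ~~ indep (x |` J) -> spanned I x.
Proof.
move=> indI indJ JI depxJ; rewrite /spanned; case: (boolP (x \in I)) => //= xI.
apply/negP => indxI; have leJI := card_spanned indI indJ JI.
(* Grow J inside J `|` (x |` I) to the size of x |` I: the result either
   contains x, or is spanned by I although larger than I. *)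
have [|J' [JJ' J'JxI indJ' cardJ']] := indep_aug_card indJ indxI.
  by rewrite cardfsU1 xI; lia.
case: (boolP (x \in J')) => xJ'.
  by move: depxJ; rewrite (indepS _ indJ') // fsubUset fsub1set xJ' JJ'.
suff : #|` J'| <= #|` I| by rewrite cardJ' cardfsU1 xI; lia.
apply: card_spanned => // y yJ'; move: (fsubsetP J'JxI y yJ'); rewrite !inE.
case/orP => [/JI //|/orP [/eqP yx|yI]]; first by move: xJ'; rewrite -yx yJ'.
by rewrite unfold_in /spanned yI.
Qed.

Lemma basis_spanning A : indep fset0 ->
  exists I, [/\ I `<=` A, indep I & {subset A <= spanned I}].
Proof.
suff grow I : I `<=` A -> indep I ->
    exists I', [/\ I' `<=` A, indep I' & {subset A <= spanned I'}].
  by move=> indep0; apply: grow (fsub0set A) indep0.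
have [n] := ubnP (#|` A| - #|` I|); elim: n I => // n IH I cardAI IA indI.
have [spanA|/allPn [a aA]] := boolP (all (spanned I) A).
  by exists I; split=> // a /(allP spanA).
rewrite /spanned negb_or negbK => /andP [aI indaI].
have aIA : a |` I `<=` A by rewrite fsubUset fsub1set aA IA.
apply: (IH (a |` I)) => //; have := fsubset_leq_card aIA; rewrite cardfsU1 aI; lia.
Qed.

End IndependenceSystem.

Lemma dep_sub_circuit (T : choiceType) (E : {fset T}) (indep : {fset T} -> bool) C :
  C `<=` E -> ~~ indep C -> exists2 C', C' `<=` C & circuit E indep C'.
Proof.
have [n] := ubnP #|` C|; elim: n C => // n IH C /ltnSE cardC CE depC.
have [minC|/allPn [D]] := boolP (all (fun D => (D `<` C) ==> indep D) (fpowerset C)).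
  exists C => //; split=> // D DC; apply: (implyP (allP minC D _)) => //.
  by rewrite fpowersetE fproper_sub.
rewrite fpowersetE negb_imply => _ /andP [DC depD].
have DC' := fproper_sub DC.
have [|||C' C'D circC'] := IH D; rewrite ?(fsubset_trans DC') //.
  by have := fproper_ltn_card DC; lia.
by exists C' => //; apply: fsubset_trans DC'.
Qed.

Lemma bridge_indepD1 (T : choiceType) (E : {fset T}) (indep : {fset T} -> bool) e F :
  is_matroid E indep -> bridge E indep e -> F `<=` E -> indep (F `\ e) -> indep F.
Proof.
case=> _ _ indepS _ [_ eNcirc] FE indFe; apply/negPn/negP => depF.
have [C CF circC] := dep_sub_circuit FE depF.
have [_ depC _] := circC; move/negP: depC; apply.
by apply: indepS indFe _; rewrite fsubsetD1 CF eNcirc.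
Qed.

Definition wf_edges (S : {fset edge}) := {in S, forall e : edge, e.1 < e.2}.

Lemma wf_edges_gE G : wf_edges (gE G).
Proof. by move=> e; apply: (allP (gE_wf G)). Qed.

Lemma wf_edgesS A B : A `<=` B -> wf_edges B -> wf_edges A.
Proof. by move=> /fsubsetP AB wfB e /AB; apply: wfB. Qed.

Lemma wf_edgesU1 e S : e.1 < e.2 -> wf_edges S -> wf_edges (e |` S).
Proof. by move=> e12 wfS g; rewrite in_fset1U => /orP [/eqP ->|/wfS]. Qed.

Definition wf_part (S : {fset edge}) : {fset edge} := [fset e in S | e.1 < e.2].

Lemma wf_part_wf S : all (fun e : edge => e.1 < e.2) (wf_part S).
Proof. by apply/allP => e; rewrite !inE => /andP []. Qed.

Definition edge_graph (S : {fset edge}) : graph := Graph (wf_part_wf S).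

Lemma edge_graphE S : wf_edges S -> gE (edge_graph S) = S.
Proof.
by move=> wfS; apply/fsetP => e; rewrite !inE; case: (boolP (e \in S)) => //= /wfS.
Qed.

Lemma edge_map_wf (phi : nat -> nat) S :
  wf_edges S -> {in verts S &, injective phi} -> wf_edges [fset edge_map phi e | e in S].
Proof.
move=> wfS inj _ /imfsetP [e /= eS ->]; apply: mkedge_lt; apply/eqP.
by move=> /(inj _ _ (verts1 eS) (verts2 eS)) e12; move: (wfS e eS); rewrite e12 ltnn.
Qed.

Lemma verts_edge_map (phi : nat -> nat) S :
  verts [fset edge_map phi e | e in S] = [fset phi v | v in verts S].
Proof.
apply/fsetP => w; apply/vertsP/imfsetP => /=.
  case=> _ /imfsetP [e /= eS ->]; rewrite mkedge_ends => /orP [] /eqP ->.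
    by exists e.1; rewrite ?verts1.
  by exists e.2; rewrite ?verts2.
case=> v /vertsP [e eS ve] ->; exists (edge_map phi e); first exact: in_imfset.
by rewrite mkedge_ends; case/orP: ve => /eqP ->; rewrite eqxx ?orbT.
Qed.

Lemma edge_graph_iso (phi : nat -> nat) S :
  wf_edges S -> {in verts S &, injective phi} ->
  graph_iso (edge_graph S) (edge_graph [fset edge_map phi e | e in S]) phi.
Proof.
move=> wfS inj; have wfS' := edge_map_wf wfS inj.
rewrite /graph_iso /gV !edge_graphE //.
split=> //; first by rewrite -verts_edge_map.
move=> u v uS vS; apply/idP/imfsetP => [uvS|[e /= eS]].
  by exists (mkedge u v); rewrite ?edge_map_mkedge.
have [e1 e2] := (verts1 eS, verts2 eS).
rewrite /edge_map => /mkedge_eq [] [/inj ue /inj ve].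
  by rewrite ue // ve // mkedge_id ?wfS.
by rewrite mkedgeC ue // ve // mkedge_id ?wfS.
Qed.

Definition fresh (V : {fset nat}) : nat := (\max_(v <- V) v).+1.

Lemma fresh_gt v V : v \in V -> v < fresh V.
Proof. by move=> vV; rewrite ltnS; apply: leq_bigmax_seq. Qed.

Definition iota_fset m n : {fset nat} := seq_fset tt (iota m n).

Lemma card_iota_fset m n : #|` iota_fset m n| = n.
Proof. by rewrite size_seq_fset undup_id ?iota_uniq // size_iota. Qed.

Lemma in_iota_fset m n x : (x \in iota_fset m n) = (m <= x < m + n).
Proof. by rewrite seq_fsetE mem_iota. Qed.

Definition star (w : nat) (L : {fset nat}) : {fset edge} := [fset mkedge w l | l in L].

Lemma star_wf w L : w \notin L -> wf_edges (star w L).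
Proof.
move=> wL _ /imfsetP [l /= lL ->]; apply: mkedge_lt.
by apply: contraNneq wL => ->.
Qed.

Lemma card_star w L : w \notin L -> #|` star w L| = #|` L|.
Proof.
move=> wL; rewrite card_in_imfset // => a b aL bL /mkedge_eq [[_ //]|[wb aw]].
by move: wL; rewrite -aw aL.
Qed.

Lemma starU1 w x L : star w (x |` L) = mkedge w x |` star w L.
Proof. exact: imfsetU1. Qed.

Lemma verts_star w L : verts (star w L) `<=` w |` L.
Proof.
apply/fsubsetP => v /vertsP [_ /imfsetP [l /= lL ->]].
by rewrite mkedge_ends in_fset1U => /orP [->|/eqP ->] //; rewrite lL orbT.
Qed.

Lemma edge_map_star (phi : nat -> nat) w L :
  [fset edge_map phi e | e in star w L] = star (phi w) [fset phi l | l in L].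
Proof.
apply/fsetP => e; apply/imfsetP/imfsetP => /= -[_ /imfsetP [l /= lL ->] ->].
  by exists (phi l); rewrite ?in_imfset ?edge_map_mkedge.
by exists (mkedge w l); rewrite ?in_imfset ?edge_map_mkedge.
Qed.

Section GraphMatroidFamily.
Variable M : graph -> {fset edge} -> bool.
Hypothesis famM : graph_matroid_family M.

(* By the restriction axiom, whether S is independent in M(G) does not depend
   on the graph G containing S. *)
Definition indep (S : {fset edge}) := M (edge_graph S) S.

Lemma M_indep G S : M G S = (S `<=` gE G) && indep S.
Proof.
have [matM _ restrM] := famM; case: (boolP (S `<=` gE G)) => /= SG; last first.
  by have [subE _ _ _] := matM G; apply/negP => /subE; apply/negP.
have wfS := wf_edgesS SG (@wf_edges_gE G).
have subS : subgraph (edge_graph S) G by rewrite /subgraph edge_graphE.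
by rewrite /indep (restrM _ _ subS) edge_graphE // fsubset_refl.
Qed.

Lemma indep_wf S : indep S -> wf_edges S.
Proof.
have [matM _ _] := famM; have [subE _ _ _] := matM (edge_graph S).
by move=> /subE SE; apply: wf_edgesS SE (@wf_edges_gE _).
Qed.

Lemma indepS I J : I `<=` J -> indep J -> indep I.
Proof.
move=> IJ indJ; have [matM _ _] := famM; have [_ _ hered _] := matM (edge_graph J).
by have := hered I J indJ IJ; rewrite M_indep => /andP [].
Qed.

Lemma indep0 : indep fset0.
Proof.
have [matM _ _] := famM; have [_ + _ _] := matM (edge_graph fset0).
by rewrite M_indep => /andP [].
Qed.

Lemma indep_aug I J : indep I -> indep J -> #|` I| < #|` J| ->
  exists2 x, x \in J `\` I & indep (x |` I).
Proof.
move=> indI indJ ltIJ; have [matM _ _] := famM.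
have wfIJ : wf_edges (I `|` J).
  by move=> e; rewrite in_fsetU => /orP [/(indep_wf indI)|/(indep_wf indJ)].
have [_ _ _ aug] := matM (edge_graph (I `|` J)).
have MI : M (edge_graph (I `|` J)) I by rewrite M_indep edge_graphE ?fsubsetUl.
have MJ : M (edge_graph (I `|` J)) J by rewrite M_indep edge_graphE ?fsubsetUr.
by have [x xJI] := aug I J MI MJ ltIJ; rewrite M_indep => /andP [_]; exists x.
Qed.

Lemma indep_edge_map (phi : nat -> nat) S : wf_edges S ->
  {in verts S &, injective phi} -> indep [fset edge_map phi e | e in S] = indep S.
Proof.
move=> wfS inj; have [_ isoM _] := famM.
have [_ _ indE] := isoM _ _ _ (edge_graph_iso wfS inj).
by rewrite /indep [RHS]indE ?edge_graphE.
Qed.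

Lemma star_iso w L w' L' : w \notin L -> w' \notin L' -> #|` L| = #|` L'| ->
  indep (star w L) = indep (star w' L').
Proof.
move=> wL wL' LL'; have [f injf fL] := fset_bij 0 LL'.
pose phi v := if v == w then w' else f v.
have phiw : phi w = w' by rewrite /phi eqxx.
have phiL : [fset phi l | l in L] = L'.
  rewrite -fL; apply: eq_in_imfset => l lL; rewrite /phi.
  by case: eqP => // lw; move: wL; rewrite -lw lL.
have phiLw' l : l \in L -> phi l != w'.
  by move=> lL; rewrite -phiL in wL'; apply: contraNneq wL' => <-; apply: in_imfset.
have inj : {in verts (star w L) &, injective phi}.
  move=> a b /(fsubsetP (verts_star w L)) + /(fsubsetP (verts_star w L)).
  rewrite !in_fset1U => /orP [/eqP ->|aL] /orP [/eqP ->|bL] //.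
  - by move=> eqw'; move: (phiLw' b bL); rewrite -eqw' phiw eqxx.
  - by move=> eqw'; move: (phiLw' a aL); rewrite eqw' phiw eqxx.
  have [aw bw] : a != w /\ b != w by split; apply: contraNneq wL => <-.
  by rewrite /phi (negbTE aw) (negbTE bw); apply: injf.
by rewrite -(indep_edge_map (star_wf wL) inj) edge_map_star phiL phiw.
Qed.

Lemma spanning_of_dep_stars k :
  (forall w L, w \notin L -> #|` L| = k -> indep (star w L)) ->
  (forall w L, w \notin L -> #|` L| = k.+1 -> ~~ indep (star w L)) ->
  exists2 I, indep I & forall g : edge, g.1 < g.2 -> spanned indep I g.
Proof.
move=> indk depk; pose W := iota_fset 0 k; pose L := iota_fset k k.
have [cardW cardL] : #|` W| = k /\ #|` L| = k by rewrite !card_iota_fset.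
have WL a : a \in W -> a \notin L by rewrite !in_iota_fset; lia.
(* A basis of K_{k,k} spans its k-stars, hence every edge at a vertex of W,
   hence every edge. *)
pose S := [fset mkedge a b | a in W, b in L].
have [I [_ indI spanS]] := basis_spanning S indep0.
have spanW a x : a \in W -> x != a -> spanned indep I (mkedge a x).
  move=> aW xa; case: (boolP (x \in L)) => xL; first by apply: spanS; apply: in_imfset2.
  apply: (spanned_dep indepS indep_aug indI (indk _ _ (WL a aW) cardL)).
    by move=> _ /imfsetP [l /= lL ->]; apply: spanS; apply: in_imfset2.
  by rewrite -starU1 depk // ?cardfsU1 ?xL ?cardL // in_fset1U negb_or eq_sym xa WL.
exists I => // g g12; have g21 : g.2 != g.1 by rewrite neq_ltn g12 orbT.
case: (boolP (g.1 \in W)) => g1W; first by rewrite -(mkedge_id g12); apply: spanW.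
case: (boolP (g.2 \in W)) => g2W.
  by rewrite -(mkedge_id g12) mkedgeC; apply: spanW; rewrite // eq_sym.
apply: (spanned_dep indepS indep_aug indI (indk _ _ g1W cardW)).
  move=> _ /imfsetP [a /= aW ->]; rewrite mkedgeC; apply: spanW => //.
  by apply: contraNneq g1W => ->.
rewrite -{1}(mkedge_id g12) -starU1 depk // ?cardfsU1 ?g2W ?cardW //.
by rewrite in_fset1U negb_or eq_sym g21.
Qed.

Hypothesis unbM : unbounded_family M.

Lemma indep_large k : exists2 J, indep J & k <= #|` J|.
Proof.
have [n] := unbM k; rewrite /mrank; set E := gE (K n) => rankE.
have [/hasP [J _ /andP [MJ kJ]]|/hasPn small] :=
  boolP (has (fun J => M (K n) J && (k <= #|` J|)) (fpowerset E)).
  by rewrite M_indep in MJ; case/andP: MJ => _; exists J.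
case: k rankE small => [|k] rankE small; first by exists fset0; rewrite ?indep0.
suff : \max_(J <- fpowerset E | M (K n) J) #|` J| <= k.
  by move/(leq_trans rankE); rewrite ltnn.
by apply/bigmax_leqP_seq => J JE MJ; move: (small J JE); rewrite MJ -ltnNge.
Qed.

Lemma no_spanning_indep I :
  indep I -> ~ (forall g : edge, g.1 < g.2 -> spanned indep I g).
Proof.
move=> indI spanI; have [J indJ] := indep_large #|` I|.+1.
have := card_spanned indep_aug indI indJ (fun g gJ => spanI g (indep_wf indJ gJ)).
by rewrite leqNgt => /negP.
Qed.

Lemma star_indep w L : w \notin L -> indep (star w L).
Proof.
move=> wL; move def_k: #|` L| => k; elim: k w L wL def_k => [|k IH] w L wL cardL.
  by move/eqP: cardL; rewrite cardfs_eq0 => /eqP ->; rewrite /star imfset0 indep0.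
apply/negPn/negP => depL.
have depk w' L' : w' \notin L' -> #|` L'| = k.+1 -> ~~ indep (star w' L').
  by move=> w'L' cardL'; rewrite -(star_iso wL w'L') ?cardL.
have [I indI spanI] := spanning_of_dep_stars IH depk.
exact: no_spanning_indep indI spanI.
Qed.

Lemma indep_pendant_relabel F x y z : wf_edges F -> x != y -> x != z ->
  y \notin verts F -> z \notin verts F ->
  indep (mkedge x y |` F) = indep (mkedge x z |` F).
Proof.
move=> wfF xy xz yF zF; pose phi v := if v == y then z else if v == z then y else v.
have inj : injective phi by move=> a b; rewrite /phi; do ! case: eqP; lia.
have wfxyF := wf_edgesU1 (mkedge_lt xy) wfF.
have phiF v : v \in verts F -> phi v = v.
  move=> vF; rewrite /phi; case: eqP => [vy|_]; first by move: yF; rewrite -vy vF.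
  by case: eqP => // vz; move: zF; rewrite -vz vF.
rewrite -(indep_edge_map wfxyF (in2W inj)) imfsetU1 edge_map_mkedge.
have -> : phi x = x by rewrite /phi (negbTE xy) (negbTE xz).
have -> : phi y = z by rewrite /phi eqxx.
congr (indep (_ |` _)); rewrite -[RHS]imfset_id; apply: eq_in_imfset => e eF.
by rewrite /edge_map !phiF ?verts1 ?verts2 ?mkedge_id ?wfF.
Qed.

Lemma indep_pendant F x y : indep F -> x != y -> y \notin verts F ->
  indep (mkedge x y |` F).
Proof.
move=> indF xy yF.
(* The star at x on #|F| + 1 fresh leaves is independent and lends F an edge. *)
pose Z := iota_fset (fresh (x |` verts F)) #|` F|.+1.
have ZxF z : z \in Z -> z \notin x |` verts F.
  rewrite in_iota_fset => /andP [freshz _]; apply/negP => /fresh_gt; lia.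
have xZ : x \notin Z := contraL (ZxF x) (fset1U1 x _).
have [|t /fsetDP [/imfsetP [z /= zZ ->] _]] := indep_aug indF (star_indep xZ).
  by rewrite card_star // card_iota_fset.
have := ZxF z zZ; rewrite in_fset1U negb_or eq_sym => /andP [xz zF].
by rewrite (indep_pendant_relabel (indep_wf indF) xy xz yF zF).
Qed.

Lemma bridge_swap_iso G e x y : bridge (gE G) (M G) e -> x != y -> y \notin gV G ->
  let f := mkedge x y in let H := edge_graph (f |` (gE G `\ e)) in
  matroid_iso (gE G) (M G) (gE H) (M H) (fun g => if g == e then f else g).
Proof.
move=> bridge_e xy yG f H; have [eG _] := bridge_e.
have fG : f \notin gE G.
  by apply: contra yG => fG; apply/vertsP; exists f; rewrite // mkedge_ends eqxx orbT.
have HE : gE H = f |` (gE G `\ e).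
  exact/edge_graphE/wf_edgesU1/(wf_edgesS (fsubsetDl _ _) (@wf_edges_gE G))/mkedge_lt.
split.
- move=> a b aG bG; case: eqP => [->|_]; case: eqP => [->|_] //.
    by move=> fb; move: fG; rewrite fb bG.
  by move=> af; move: fG; rewrite -af aG.
- by rewrite imfset_replace eG HE.
move=> F FG; rewrite imfset_replace !M_indep FG HE /=; case: ifP => eF; last first.
  by rewrite fsubsetU // fsubsetD1 FG eF orbT.
rewrite fsetUS ?fsetSD //=; apply/idP/idP => [indF|indfF].
  apply: indep_pendant (indepS (fsubsetDl _ _) indF) xy _.
  by apply: contra yG; apply/fsubsetP/vertsS/(fsubset_trans _ FG)/fsubsetDl.
have FeG : F `\ e `<=` gE G := fsubset_trans (fsubsetDl _ _) FG.
have [matM _ _] := famM; have := bridge_indepD1 (matM G) bridge_e FG.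
by rewrite !M_indep FG FeG (indepS (fsubsetU1 _ _) indfF) => /(_ isT).
Qed.

Lemma bridge_new_ends G e x y : reconstructible M G -> bridge (gE G) (M G) e ->
  x != y -> y \notin gV G ->
  new_ends (verts (gE G `\ e)) e = ((x \notin verts (gE G `\ e)) + 1)%N.
Proof.
move=> recG bridge_e xy yG; have [eG _] := bridge_e.
(* Count the vertices of G = (G - e) + e and of (G - e) + xy. *)
have [phi [[inj img _] _]] := recG _ _ (bridge_swap_iso bridge_e xy yG).
set X := gE G `\ e in img *; set f := mkedge x y in img.
have wfX : wf_edges X := wf_edgesS (fsubsetDl _ _) (@wf_edges_gE G).
have cardV : #|` verts (gE (edge_graph (f |` X)))| = #|` verts (gE G)|.
  by rewrite -[verts (gE (edge_graph _))]/(gV _) -img card_in_imfset.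
rewrite edge_graphE in cardV; last exact/wf_edgesU1/wfX/mkedge_lt.
rewrite -[gE G](fsetD1K eG) in cardV.
have yX : y \notin verts X by apply: contra yG; apply/fsubsetP/vertsS/fsubsetDl.
move: cardV; rewrite !card_vertsU1 ?new_ends_mkedge ?yX; last 2 first.
- by rewrite neq_ltn (wf_edges_gE eG).
- by rewrite neq_ltn mkedge_lt.
by move/addIn.
Qed.

End GraphMatroidFamily.

Unset Implicit Arguments.

Theorem lemma3p1 (M : graph -> {fset edge} -> bool) (G : graph) :
  graph_matroid_family M -> unbounded_family M ->
  reconstructible M G -> 2 <= #|` gE G| ->
  bridgeless (gE G) (M G).
Proof.
move=> famM unbM recG cardE e bridge_e; have [eG _] := bridge_e.
set X := gE G `\ e.
have [g gX] : exists g, g \in X.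
  by apply/fset0Pn; rewrite -cardfs_eq0 /X; move: cardE; rewrite (cardfsD1 e) eG; lia.
have XG : {subset verts X <= gV G} by apply/fsubsetP/vertsS/fsubsetDl.
pose c := fresh (gV G).
have cG : c \notin gV G by apply/negP => /fresh_gt; rewrite ltnn.
have c1X : c.+1 \notin verts X by apply/negP => /XG /fresh_gt; lia.
have g1c : g.1 != c by apply: contraNneq cG => <-; apply/XG/verts1.
have new_ends_e := bridge_new_ends famM unbM recG bridge_e.
have [ends1|] := eqVneq (new_ends (verts X) e) 1.
  by have := new_ends_e c.+1 c (negbT (gtn_eqF (ltnSn c))) cG; rewrite ends1 c1X.
by rewrite (new_ends_e g.1 c) // verts1.
Qed.
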